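(* Let $\phi$ be a formula of $\mathsf{BSML}$ extended with both $\sqcup$ and $\oslash$. If $\phi$ does not contain $\mathrm{NE}$, then $\phi$ is downward closed and has the empty state property. If $\phi$ does not contain $\sqcup$, then $\phi$ is union closed. In particular, all formulas of $\mathsf{BSML}$ and of $\mathsf{BSML}^{\oslash}$ are union closed, and all formulas of $\mathsf{ML}$ are flat.
   Context: Formulas are generated by $\phi ::= p \mid \neg\phi \mid (\phi\wedge\phi) \mid (\phi\vee\phi) \mid \Diamond\phi \mid \mathrm{NE}\mid \phi\sqcup\phi\mid\oslash\phi$; $\mathsf{BSML}$ is the fragment without $\sqcup,\oslash$, $\mathsf{BSML}^{\oslash}$ the fragment without $\sqcup$, and $\mathsf{ML}$ the $\mathrm{NE}$-free fragment of $\mathsf{BSML}$. Models $M=(W,R,V)$ are Kripke models; a state is a subset $s\subseteq W$; $R[w]=\{v:wRv\}$. Support $\models$ and anti-support $\dashv$: $s\models p$ iff $s\subseteq V(p)$; $s\dashv p$ iff $s\cap V(p)=\emptyset$; $s\models\mathrm{NE}$ iff $s\neq\emptyset$; $s\dashv\mathrm{NE}$ iff $s=\emptyset$; $s\models\neg\phi$ iff $s\dashv\phi$; $s\dashv\neg\phi$ iff $s\models\phi$; $s\models\phi\wedge\psi$ iff both; $s\dashv\phi\wedge\psi$ iff $s=t\cup u$ with $t\dashv\phi,u\dashv\psi$; $s\models\phi\vee\psi$ iff $s=t\cup u$ with $t\models\phi,u\models\psi$; $s\dashv\phi\vee\psi$ iff $s\dashv\phi$ and $s\dashv\psi$; $s\models\phi\sqcup\psi$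 iff $s\models\phi$ or $s\models\psi$; $s\dashv\phi\sqcup\psi$ iff $s\dashv\phi$ and $s\dashv\psi$; $s\models\Diamond\phi$ iff every $w\in s$ has a nonempty $t\subseteq R[w]$ with $t\models\phi$; $s\dashv\Diamond\phi$ iff $R[w]\dashv\phi$ for all $w\in s$; $s\models\oslash\phi$ iff $s\models\phi$ or $s=\emptyset$; $s\dashv\oslash\phi$ iff $s\dashv\phi$. A formula $\phi$ is downward closed if $M,s\models\phi$ and $t\subseteq s$ imply $M,t\models\phi$; union closed if $M,s\models\phi$ for all $s$ in a nonempty set $S$ of states implies $M,\bigcup S\models\phi$; has the empty state property if $M,\emptyset\models\phi$ for every $M$; flat if $M,s\models\phi$ iff $M,\{w\}\models\phi$ for all $w\in s$. *)

Inductive form : Type :=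
| Atom : nat -> form
| Neg : form -> form
| And : form -> form -> form
| Or : form -> form -> form
| Dia : form -> form
| NE : form
| GOr : form -> form -> form
| Empt : form -> form.

Record model : Type := Model {
  world : Type;
  rel : world -> world -> Prop;
  val : nat -> world -> Prop
}.

Definition state (M : model) := world M -> Prop.

Definition subset {M : model} (t s : state M) : Prop := forall w, t w -> s w.
Definition is_union2 {M : model} (s t u : state M) : Prop :=
  forall w, s w <-> (t w \/ u w).
Definition nonempty {M : model} (s : state M) : Prop := exists w, s w.
Definition empty {M : model} (s : state M) : Prop := forall w, ~ s w.
Definition succs {M : model} (w : world M) : state M := fun v => rel M w v.
Definition singleton {M : model} (w : world M) : state M := fun v => v = w.

Fixpoint supp (M : model) (s : state M) (phi : form) {struct phi} : Prop :=
  match phi with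
  | Atom p => forall w, s w -> val M p w
  | Neg a => anti M s a
  | And a b => supp M s a /\ supp M s b
  | Or a b => exists t u, is_union2 s t u /\ supp M t a /\ supp M u b
  | Dia a => forall w, s w ->
       exists t, nonempty t /\ subset t (succs w) /\ supp M t a
  | NE => nonempty s
  | GOr a b => supp M s a \/ supp M s b
  | Empt a => supp M s a \/ empty s
  end
with anti (M : model) (s : state M) (phi : form) {struct phi} : Prop :=
  match phi with
  | Atom p => forall w, s w -> ~ val M p w
  | Neg a => supp M s a
  | And a b => exists t u, is_union2 s t u /\ anti M t a /\ anti M u b
  | Or a b => anti M s a /\ anti M s b
  | Dia a => forall w, s w -> anti M (succs w) a
  | NE => empty s
  | GOr a b => anti M s a /\ anti M s b
  | Empt a => anti M s a
  end.

Fixpoint has_NE (phi : form) : bool :=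
  match phi with
  | Atom _ => false
  | NE => true
  | Neg a | Dia a | Empt a => has_NE a
  | And a b | Or a b | GOr a b => has_NE a || has_NE b
  end.

Fixpoint has_GOr (phi : form) : bool :=
  match phi with
  | Atom _ | NE => false
  | Neg a | Dia a | Empt a => has_GOr a
  | And a b | Or a b => has_GOr a || has_GOr b
  | GOr _ _ => true
  end.

Fixpoint has_Empt (phi : form) : bool :=
  match phi with
  | Atom _ | NE => false
  | Neg a | Dia a => has_Empt a
  | And a b | Or a b | GOr a b => has_Empt a || has_Empt b
  | Empt _ => true
  end.

Definition in_BSML (phi : form) : Prop := has_GOr phi = false /\ has_Empt phi = false.
Definition in_BSMLo (phi : form) : Prop := has_GOr phi = false.
Definition in_ML (phi : form) : Prop := in_BSML phi /\ has_NE phi = false.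

Definition downward_closed (phi : form) : Prop :=
  forall (M : model) (s t : state M), supp M s phi -> subset t s -> supp M t phi.

Definition union_closed (phi : form) : Prop :=
  forall (M : model) (S : state M -> Prop),
    (exists s, S s) ->
    (forall s, S s -> supp M s phi) ->
    supp M (fun w => exists s, S s /\ s w) phi.

Definition empty_state_property (phi : form) : Prop :=
  forall (M : model), supp M (fun _ => False) phi.

Definition flat (phi : form) : Prop :=
  forall (M : model) (s : state M),
    supp M s phi <-> (forall w, s w -> supp M (singleton w) phi).

From Stdlib Require Import Classical FunctionalExtensionality PropExtensionality Bool.

(* Support and anti-support are proved closed simultaneously, by induction on the
   formula.  Every clause of the semantics is assembled from a few operations on
   properties of states: pointwise conditions (atoms, diamond, emptiness),
   conjunction, splitting a state into two parts, disjunction and nonemptiness.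
   Each operation preserves downward closure, union closure and the empty state
   property as far as it can: NE is the only clause that is not downward closed,
   and global disjunction the only one that is not union closed.  A property
   that is downward closed, union closed and holds of the empty state is
   determined by the singletons, which gives flatness. *)

Section StateProperties.

Context {M : model}.
Implicit Types (s t u : state M) (P Q S : state M -> Prop) (R : world M -> Prop).

Definition empty_state : state M := fun _ => False.

Definition bigunion S : state M := fun w => exists s, S s /\ s w.

Definition pointwise R : state M -> Prop := fun s => forall w, s w -> R w.

Definition splits P Q : state M -> Prop :=
  fun s => exists t u, is_union2 s t u /\ P t /\ Q u.

Definition downward_closed_pred P : Prop :=
  forall s t, P s -> subset t s -> P t.

Definition union_closed_pred P : Prop :=
  forall S, (exists s, S s) -> (forall s, S s -> P s) -> P (bigunion S).

Lemma state_ext s t : (forall w, s w <-> t w) -> s = t.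
Proof.
  intro Hst. apply functional_extensionality; intro w.
  apply propositional_extensionality, Hst.
Qed.

Lemma pointwise_downward_closed R : downward_closed_pred (pointwise R).
Proof. intros s t Hs Hts w Hw. apply Hs, Hts, Hw. Qed.

Lemma conj_downward_closed P Q :
  downward_closed_pred P -> downward_closed_pred Q ->
  downward_closed_pred (fun s => P s /\ Q s).
Proof. intros HP HQ s t [HPs HQs] Hts. split; [exact (HP s t HPs Hts) | exact (HQ s t HQs Hts)]. Qed.

Lemma disj_downward_closed P Q :
  downward_closed_pred P -> downward_closed_pred Q ->
  downward_closed_pred (fun s => P s \/ Q s).
Proof. intros HP HQ s t [HPs | HQs] Hts; [left; exact (HP s t HPs Hts) | right; exact (HQ s t HQs Hts)]. Qed.

Lemma is_union2_restrict s t u s' :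
  is_union2 s t u -> subset s' s ->
  is_union2 s' (fun w => t w /\ s' w) (fun w => u w /\ s' w).
Proof.
  intros Hstu Hs' w. split.
  - intro Hw. destruct (proj1 (Hstu w) (Hs' w Hw)); [left | right]; split; assumption.
  - intros [[_ Hw] | [_ Hw]]; exact Hw.
Qed.

Lemma splits_downward_closed P Q :
  downward_closed_pred P -> downward_closed_pred Q ->
  downward_closed_pred (splits P Q).
Proof.
  intros HP HQ s s' [t [u [Hstu [HPt HQu]]]] Hs'.
  exists (fun w => t w /\ s' w), (fun w => u w /\ s' w).
  split; [exact (is_union2_restrict s t u s' Hstu Hs') | split].
  - apply (HP t); [exact HPt | intros w [Hw _]; exact Hw].
  - apply (HQ u); [exact HQu | intros w [Hw _]; exact Hw].
Qed.

Lemma pointwise_empty_state R : pointwise R empty_state.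
Proof. intros w []. Qed.

Lemma splits_empty_state P Q : P empty_state -> Q empty_state -> splits P Q empty_state.
Proof.
  intros HP HQ. exists empty_state, empty_state.
  split; [intro w; unfold empty_state; tauto | split; assumption].
Qed.

Lemma pointwise_union_closed R : union_closed_pred (pointwise R).
Proof. intros S _ HS w [s [Hs Hw]]. exact (HS s Hs w Hw). Qed.

Lemma conj_union_closed P Q :
  union_closed_pred P -> union_closed_pred Q ->
  union_closed_pred (fun s => P s /\ Q s).
Proof.
  intros HP HQ S Hne HS. split.
  - apply HP; [exact Hne | intros s Hs; exact (proj1 (HS s Hs))].
  - apply HQ; [exact Hne | intros s Hs; exact (proj2 (HS s Hs))].
Qed.

(* Each member of [S] is split as [t ∪ u]; the union of [S] is then split into
   the union of all the [t]'s and the union of all the [u]'s. *)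
Lemma splits_union_closed P Q :
  union_closed_pred P -> union_closed_pred Q -> union_closed_pred (splits P Q).
Proof.
  intros HP HQ S [s0 Hs0] HS.
  set (Lparts := fun t => exists s u, S s /\ is_union2 s t u /\ P t /\ Q u).
  set (Rparts := fun u => exists s t, S s /\ is_union2 s t u /\ P t /\ Q u).
  destruct (HS s0 Hs0) as [t0 [u0 [Hs0tu [HPt0 HQu0]]]].
  exists (bigunion Lparts), (bigunion Rparts). split; [|split].
  - intro w. split.
    + intros [s [Hs Hw]]. destruct (HS s Hs) as [t [u [Hstu [HPt HQu]]]].
      destruct (proj1 (Hstu w) Hw) as [Hwt | Hwu].
      * left. exists t. split; [exists s, u; auto | exact Hwt].
      * right. exists u. split; [exists s, t; auto | exact Hwu].
    + intros [[t [[s [u [Hs [Hstu _]]]] Hw]] | [u [[s [t [Hs [Hstu _]]]] Hw]]];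
        exists s; split; [exact Hs | apply Hstu; auto | exact Hs | apply Hstu; auto].
  - apply HP.
    + exists t0, s0, u0. auto.
    + intros t [s [u [_ [_ [HPt _]]]]]. exact HPt.
  - apply HQ.
    + exists u0, s0, t0. auto.
    + intros u [s [t [_ [_ [_ HQu]]]]]. exact HQu.
Qed.

Lemma nonempty_union_closed : union_closed_pred nonempty.
Proof.
  intros S [s Hs] HS. destruct (HS s Hs) as [w Hw]. exists w, s. auto.
Qed.

(* The members of [S] outside [P] are empty, so they do not contribute to the union. *)
Lemma or_empty_union_closed P :
  union_closed_pred P -> union_closed_pred (fun s => P s \/ empty s).
Proof.
  intros HP S _ HS.
  destruct (classic (exists s, S s /\ P s)) as [HSP | HnoP].
  - left. replace (bigunion S) with (bigunion (fun s => S s /\ P s)).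
    + apply HP; [exact HSP | intros s [_ HPs]; exact HPs].
    + apply state_ext; intro w. split.
      * intros [s [[Hs _] Hw]]. exists s. auto.
      * intros [s [Hs Hw]]. exists s.
        destruct (HS s Hs) as [HPs | Hes]; [auto | destruct (Hes w Hw)].
  - right. intros w [s [Hs Hw]].
    destruct (HS s Hs) as [HPs | Hes]; [apply HnoP; exists s; auto | exact (Hes w Hw)].
Qed.

End StateProperties.

Lemma NE_free_supp_anti_downward_closed phi : has_NE phi = false -> forall M,
  downward_closed_pred (fun s : state M => supp M s phi) /\
  downward_closed_pred (fun s : state M => anti M s phi).
Proof.
  induction phi as [p | a IHa | a IHa b IHb | a IHa b IHb | a IHa | | a IHa b IHb | a IHa];
    simpl; intros Hfree M; try apply orb_false_iff in Hfree as [Ha Hb].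
  - split; apply pointwise_downward_closed.
  - destruct (IHa Hfree M). split; assumption.
  - destruct (IHa Ha M), (IHb Hb M).
    split; [apply conj_downward_closed | apply splits_downward_closed]; assumption.
  - destruct (IHa Ha M), (IHb Hb M).
    split; [apply splits_downward_closed | apply conj_downward_closed]; assumption.
  - split; apply pointwise_downward_closed.
  - discriminate.
  - destruct (IHa Ha M), (IHb Hb M).
    split; [apply disj_downward_closed | apply conj_downward_closed]; assumption.
  - destruct (IHa Hfree M).
    split; [apply disj_downward_closed, pointwise_downward_closed |]; assumption.
Qed.

Lemma NE_free_supp_anti_empty_state phi : has_NE phi = false -> forall M,
  supp M empty_state phi /\ anti M empty_state phi.
Proof.
  induction phi as [p | a IHa | a IHa b IHb | a IHa b IHb | a IHa | | a IHa b IHb | a IHa];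
    simpl; intros Hfree M; try apply orb_false_iff in Hfree as [Ha Hb].
  - split; apply pointwise_empty_state.
  - destruct (IHa Hfree M). split; assumption.
  - destruct (IHa Ha M), (IHb Hb M).
    split; [split | apply splits_empty_state]; assumption.
  - destruct (IHa Ha M), (IHb Hb M).
    split; [apply splits_empty_state | split]; assumption.
  - split; apply pointwise_empty_state.
  - discriminate.
  - destruct (IHa Ha M), (IHb Hb M). split; [left | split]; assumption.
  - destruct (IHa Hfree M). split; [left |]; assumption.
Qed.

Lemma GOr_free_supp_anti_union_closed phi : has_GOr phi = false -> forall M,
  union_closed_pred (fun s : state M => supp M s phi) /\
  union_closed_pred (fun s : state M => anti M s phi).
Proof.
  induction phi as [p | a IHa | a IHa b IHb | a IHa b IHb | a IHa | | a IHa b IHb | a IHa];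
    simpl; intros Hfree M; try apply orb_false_iff in Hfree as [Ha Hb].
  - split; apply pointwise_union_closed.
  - destruct (IHa Hfree M). split; assumption.
  - destruct (IHa Ha M), (IHb Hb M).
    split; [apply conj_union_closed | apply splits_union_closed]; assumption.
  - destruct (IHa Ha M), (IHb Hb M).
    split; [apply splits_union_closed | apply conj_union_closed]; assumption.
  - split; apply pointwise_union_closed.
  - split; [apply nonempty_union_closed | apply pointwise_union_closed].
  - discriminate.
  - destruct (IHa Hfree M). split; [apply or_empty_union_closed |]; assumption.
Qed.

Lemma NE_free_downward_closed phi : has_NE phi = false -> downward_closed phi.
Proof. intros Hfree M. exact (proj1 (NE_free_supp_anti_downward_closed phi Hfree M)). Qed.

Lemma NE_free_empty_state_property phi : has_NE phi = false -> empty_state_property phi.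
Proof. intros Hfree M. exact (proj1 (NE_free_supp_anti_empty_state phi Hfree M)). Qed.

Lemma GOr_free_union_closed phi : has_GOr phi = false -> union_closed phi.
Proof. intros Hfree M. exact (proj1 (GOr_free_supp_anti_union_closed phi Hfree M)). Qed.

(* A state is the union of the empty state and its singletons; the empty state
   keeps the family nonempty when the state itself is empty. *)
Lemma flat_of_closure_properties phi :
  downward_closed phi -> union_closed phi -> empty_state_property phi -> flat phi.
Proof.
  intros Hdc Huc Hesp M s. split.
  - intros Hs w Hw. apply (Hdc M s); [exact Hs | intros v Hv; rewrite Hv; exact Hw].
  - intros Hsingle.
    set (Pieces := fun t : state M => t = empty_state \/ exists w, s w /\ t = singleton w).
    replace s with (bigunion Pieces).
    + apply Huc.
      * exists empty_state. left. reflexivity.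
      * intros t [-> | [w [Hw ->]]]; [apply Hesp | exact (Hsingle w Hw)].
    + apply state_ext; intro w. split.
      * intros [t [[-> | [v [Hv ->]]] Hw]]; [destruct Hw | rewrite Hw; exact Hv].
      * intro Hw. exists (singleton w). split; [right; exists w; auto | reflexivity].
Qed.

Theorem fact2p7 :
  (forall phi : form, has_NE phi = false ->
     downward_closed phi /\ empty_state_property phi) /\
  (forall phi : form, has_GOr phi = false -> union_closed phi) /\
  (forall phi : form, in_BSML phi -> union_closed phi) /\
  (forall phi : form, in_BSMLo phi -> union_closed phi) /\
  (forall phi : form, in_ML phi -> flat phi).
Proof.
  split; [| split; [| split; [| split]]].
  - intros phi Hfree.
    split; [apply NE_free_downward_closed | apply NE_free_empty_state_property]; exact Hfree.
  - exact GOr_free_union_closed.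
  - intros phi [HGOr _]. exact (GOr_free_union_closed phi HGOr).
  - exact GOr_free_union_closed.
  - intros phi [[HGOr _] HNE]. apply flat_of_closure_properties.
    + exact (NE_free_downward_closed phi HNE).
    + exact (GOr_free_union_closed phi HGOr).
    + exact (NE_free_empty_state_property phi HNE).
Qed.
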